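(* Let $f(z)=\sum_{k\ge0}a_kz^k$ be an entire function. If $f$ is transcendental then, for all $n\in\mathbb N$, $\kappa(n,r)\to\infty$ as $r\to\infty$. If $f$ is a polynomial of degree $d$, then $\kappa(n,r)\to\infty$ as $r\to\infty$ for all $n\ne d$, but $\kappa(d,r)\to 1$ as $r\to\infty$.
   Context: For $r>0$, $M_1(r)=\frac{1}{2\pi}\int_0^{2\pi}|f(re^{i\theta})|\,d\theta$ and $\kappa(n,r)=\dfrac{M_1(r)}{|a_n|r^n}$, with the convention $\kappa(n,r)=+\infty$ if $a_n=0$. *)

From Stdlib Require Export Reals.
From Coquelicot Require Export Coquelicot.
Open Scope R_scope.

Definition entire_with_coeffs (a : nat -> C) (f : C -> C) : Prop :=
  forall z : C, is_pseries a z (f z).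

Definition M1 (f : C -> C) (r : R) : R :=
  / (2 * PI) * RInt (fun t => Cmod (f (r * cos t, r * sin t))) 0 (2 * PI).

Definition kappa (a : nat -> C) (f : C -> C) (n : nat) (r : R) : Rbar :=
  match Req_EM_T (Cmod (a n)) 0 with
  | left _ => p_infty
  | right _ => Finite (M1 f r / (Cmod (a n) * r ^ n))
  end.

Definition tends_to_infty (g : R -> Rbar) : Prop :=
  forall M : R, exists R0 : R, forall r : R, R0 < r -> Rbar_lt (Finite M) (g r).

Definition tends_to_fin (g : R -> Rbar) (l : R) : Prop :=
  forall eps : R, 0 < eps -> exists R0 : R, forall r : R, R0 < r ->
    exists k : R, g r = Finite k /\ Rabs (k - l) < eps.

Definition poly_degree (a : nat -> C) (d : nat) : Prop :=
  a d <> 0%C /\ forall k : nat, (d < k)%nat -> a k = 0%C.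

Definition transcendental (a : nat -> C) : Prop :=
  forall N : nat, exists k : nat, (N <= k)%nat /\ a k <> 0%C.

From Stdlib Require Import Lra Lia.

(* Cauchy's estimate in L^1 form: for r > 0 the Taylor partial sums converge uniformly on
   the circle |z| = r, so 2 pi r^k a_k = int_0^(2 pi) f(r e^(it)) e^(-ikt) dt; rotating a_k
   onto the positive real axis and bounding the real part of the integrand by its modulus
   gives |a_k| r^k <= M_1(r).  Hence kappa(n, r) >= (|a_k| / |a_n|) r^(k - n) -> oo whenever
   some a_k with k > n is nonzero; this covers every n when f is transcendental and n < d
   for a polynomial of degree d, while kappa(n, r) = +oo for n > d.  For n = d the triangle
   inequality gives M_1(r) <= sum_(j <= d) |a_j| r^j <= |a_d| r^d (1 + O(1/r)), which
   squeezes kappa(d, r) between 1 and 1 + O(1/r). *)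

Definition polar (r t : R) : C := (r * cos t, r * sin t).

Lemma polar_mul (r s t u : R) : (polar r t * polar s u)%C = polar (r * s) (t + u).
Proof. unfold polar, Cmult; simpl. rewrite cos_plus, sin_plus. f_equal; ring. Qed.

Lemma pow_polar (r t : R) (j : nat) : pow_n (polar r t) j = polar (r ^ j) (INR j * t).
Proof.
  induction j as [|j IH].
  - unfold polar; simpl. rewrite Rmult_0_l, cos_0, sin_0.
    change (@one C_Ring) with (RtoC 1). unfold RtoC. f_equal; ring.
  - change (pow_n (polar r t) (S j)) with (polar r t * pow_n (polar r t) j)%C.
    rewrite IH, polar_mul, S_INR. f_equal; ring.
Qed.

Lemma Cmod_polar (r t : R) : Cmod (polar r t) = Rabs r.
Proof.
  unfold Cmod, polar; simpl. rewrite <- sqrt_Rsqr_abs. f_equal.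
  pose proof (sin2_cos2 t) as H. unfold Rsqr in *. nra.
Qed.

Lemma is_series_terms_bounded (u : nat -> C) (l : C) :
  is_series u l -> exists J, forall j, (J <= j)%nat -> Cmod (u j) <= 1.
Proof.
  intros Hu. destruct (Cauchy_ex_series u (ex_intro _ l Hu) (mkposreal 1 Rlt_0_1)) as [J HJ].
  exists J. intros j Hj. specialize (HJ j j Hj Hj). rewrite sum_n_n in HJ.
  change (Cmod (u j) < 1) in HJ. lra.
Qed.

Lemma is_series_Cmod_sub_le (u : nat -> C) (l v : C) (c : R) (N : nat) :
  is_series u l -> (forall M, (N <= M)%nat -> Cmod (sum_n u M - v) <= c) ->
  Cmod (l - v) <= c.
Proof.
  intros Hu Hb. apply le_epsilon. intros eps Heps.
  destruct (proj1 (filterlim_locally_ball_norm _ _) Hu (mkposreal eps Heps)) as [N0 HN0].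
  specialize (HN0 (max N N0) (Nat.le_max_r _ _)). specialize (Hb (max N N0) (Nat.le_max_l _ _)).
  change (Cmod (sum_n u (max N N0) - l) < eps) in HN0.
  replace (l - v)%C with (- (sum_n u (max N N0) - l) + (sum_n u (max N N0) - v))%C by ring.
  eapply Rle_trans; [apply Cmod_triangle|]. rewrite Cmod_opp. lra.
Qed.

Lemma Cmod_sum_n_sub_le_geom (u : nat -> C) (N m : nat) :
  (forall j, (N < j)%nat -> Cmod (u j) <= (/2) ^ j) ->
  Cmod (sum_n u (N + m) - sum_n u N) <= (/2) ^ N - (/2) ^ (N + m).
Proof.
  intros Hu. induction m as [|m IH].
  - rewrite Nat.add_0_r, Rminus_diag. replace (sum_n u N - sum_n u N)%C with (RtoC 0) by ring.
    rewrite Cmod_0. lra.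
  - rewrite Nat.add_succ_r, sum_Sn.
    change (plus ?x ?y) with (x + y)%C.
    replace (sum_n u (N + m) + u (S (N + m)) - sum_n u N)%C
      with ((sum_n u (N + m) - sum_n u N) + u (S (N + m)))%C by ring.
    eapply Rle_trans; [apply Cmod_triangle|].
    pose proof (Hu (S (N + m)) ltac:(lia)). simpl pow in *. lra.
Qed.

Lemma is_series_geom_tail (u : nat -> C) (l : C) (N : nat) :
  is_series u l -> (forall j, (N < j)%nat -> Cmod (u j) <= (/2) ^ j) ->
  Cmod (l - sum_n u N) <= (/2) ^ N.
Proof.
  intros Hu Hgeom. apply (is_series_Cmod_sub_le u l _ _ N Hu). intros M HM.
  replace M with (N + (M - N))%nat by lia.
  pose proof (Cmod_sum_n_sub_le_geom u N (M - N) Hgeom).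
  assert (0 <= (/2) ^ (N + (M - N))) by (apply pow_le; lra). lra.
Qed.

Lemma sum_n_vanishing_tail {G : AbelianMonoid} (u : nat -> G) (d m : nat) :
  (forall k, (d < k)%nat -> u k = zero) -> sum_n u (d + m) = sum_n u d.
Proof.
  intros Hu. induction m as [|m IH]; [now rewrite Nat.add_0_r|].
  rewrite Nat.add_succ_r, sum_Sn, IH, Hu by lia. apply plus_zero_r.
Qed.

Lemma power_term_polar (w : C) (r t : R) (j : nat) :
  scal (pow_n (polar r t) j) w = (w * polar (r ^ j) (INR j * t))%C.
Proof. rewrite pow_polar. apply Cmult_comm. Qed.

Lemma Cmod_mul_polar (w : C) (r t : R) : 0 <= r -> Cmod (w * polar r t) = Cmod w * r.
Proof. intros Hr. now rewrite Cmod_mult, Cmod_polar, Rabs_pos_eq. Qed.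

Lemma ex_derive_sum_n_parts (g : nat -> R -> C) (N : nat) (t : R) :
  (forall j, ex_derive (fun s => fst (g j s)) t /\ ex_derive (fun s => snd (g j s)) t) ->
  ex_derive (fun s => fst (sum_n (fun j => g j s) N)) t /\
  ex_derive (fun s => snd (sum_n (fun j => g j s) N)) t.
Proof.
  intros Hg. induction N as [|N [IH1 IH2]].
  - split; [apply (ex_derive_ext (fun s => fst (g 0%nat s)))|
            apply (ex_derive_ext (fun s => snd (g 0%nat s)))].
    all: try (intros s; rewrite sum_O; reflexivity).
    + exact (proj1 (Hg 0%nat)).
    + exact (proj2 (Hg 0%nat)).
  - split; [apply (ex_derive_ext (fun s => fst (sum_n (fun j => g j s) N) + fst (g (S N) s)))|
            apply (ex_derive_ext (fun s => snd (sum_n (fun j => g j s) N) + snd (g (S N) s)))].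
    all: try (intros s; rewrite sum_Sn; reflexivity).
    + exact (ex_derive_plus _ _ _ IH1 (proj1 (Hg (S N)))).
    + exact (ex_derive_plus _ _ _ IH2 (proj2 (Hg (S N)))).
Qed.

Lemma fst_mul_polar (w : C) (r t : R) :
  fst (w * polar r t)%C = r * (fst w * cos t - snd w * sin t).
Proof. unfold polar, Cmult; simpl. ring. Qed.

Lemma is_RInt_cos_sin_period (m : Z) (x y : R) : m <> 0%Z ->
  is_RInt (fun t => x * cos (IZR m * t) - y * sin (IZR m * t)) 0 (2 * PI) 0.
Proof.
  intros Hm. apply not_0_IZR in Hm.
  set (F := fun t => (x * sin (IZR m * t) + y * cos (IZR m * t)) / IZR m).
  assert (Hperiod : F (2 * PI) = F 0).
  { assert (Hs : sin (IZR m * (2 * PI)) = 0).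
    { apply sin_eq_0_1. exists (2 * m)%Z. rewrite mult_IZR. ring. }
    assert (Hc : cos (IZR m * (2 * PI)) = 1).
    { replace (IZR m * (2 * PI)) with (2 * (IZR m * PI)) by ring.
      rewrite cos_2a_sin, (sin_eq_0_1 (IZR m * PI)) by (exists m; reflexivity). ring. }
    unfold F. rewrite Hs, Hc, (Rmult_0_r (IZR m)), sin_0, cos_0. f_equal; ring. }
  assert (Hzero : minus (F (2 * PI)) (F 0) = 0)
    by (rewrite Hperiod; unfold minus, plus, opp; simpl; ring).
  rewrite <- Hzero at 2. apply (@is_RInt_derive R_CompleteNormedModule).
  - intros t _. unfold F. auto_derive; trivial. field. exact Hm.
  - intros t _. apply (@ex_derive_continuous R_AbsRing R_NormedModule). auto_derive. trivial.
Qed.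

Lemma exists_unit_rotation (w : C) : exists c : C, Cmod c <= 1 /\ fst (c * w)%C = Cmod w.
Proof.
  destruct (Req_dec (Cmod w) 0) as [H0|H0].
  - exists (RtoC 0). rewrite Cmod_0, H0. split; [lra|]. simpl. ring.
  - exists (/ Cmod w * Cconj w)%C. split.
    + assert (Hw : RtoC (Cmod w) <> 0%C) by (intro E; apply H0; now injection E).
      rewrite Cmod_mult, Cmod_conj, Cmod_inv, Cmod_R, Rabs_pos_eq, Rinv_l by
        (assumption || apply Cmod_ge_0).
      lra.
    + rewrite <- Cmult_assoc, (Cmult_comm (Cconj w)), <- Cmod2_conj. simpl. field. exact H0.
Qed.

Lemma le_M1 (f : C -> C) (r x : R) :
  2 * PI * x <= RInt (fun t => Cmod (f (polar r t))) 0 (2 * PI) -> x <= M1 f r.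
Proof.
  intros H. pose proof PI_RGT_0. unfold M1.
  apply (Rmult_le_reg_l (2 * PI)); [lra|].
  rewrite <- (Rmult_assoc (2 * PI) (/ (2 * PI))), Rinv_r, Rmult_1_l by lra. exact H.
Qed.

Lemma M1_le (f : C -> C) (r x : R) :
  RInt (fun t => Cmod (f (polar r t))) 0 (2 * PI) <= 2 * PI * x -> M1 f r <= x.
Proof.
  intros H. pose proof PI_RGT_0. unfold M1.
  apply (Rmult_le_reg_l (2 * PI)); [lra|].
  rewrite <- (Rmult_assoc (2 * PI) (/ (2 * PI))), Rinv_r, Rmult_1_l by lra. exact H.
Qed.

Section Circle.

Variables (a : nat -> C) (r : R).
Hypothesis r_pos : 0 < r.

Definition circle_sum (N : nat) (t : R) : C :=
  sum_n (fun j => a j * polar (r ^ j) (INR j * t))%C N.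

(* Convergence at radius [2 r] makes the terms at radius [r] geometrically small. *)
Lemma circle_sum_geom_tail (f : C -> C) : entire_with_coeffs a f ->
  exists J, forall N t, (J <= N)%nat -> Cmod (f (polar r t) - circle_sum N t) <= (/2) ^ N.
Proof.
  intros Hf. destruct (is_series_terms_bounded _ _ (Hf (polar (2 * r) 0))) as [J HJ].
  exists J. intros N t HN. unfold circle_sum.
  rewrite <- (sum_n_ext (fun j => scal (pow_n (polar r t) j) (a j)))
    by (intros; exact (power_term_polar _ _ _ _)).
  apply is_series_geom_tail; [apply Hf|]. intros j Hj.
  specialize (HJ j ltac:(lia)). simpl in HJ.
  rewrite power_term_polar, Cmod_mul_polar, Rpow_mult_distr in HJ
    by (apply pow_le; lra).
  rewrite power_term_polar, Cmod_mul_polar, pow_inv by (apply pow_le; lra).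
  assert (H2j : 0 < 2 ^ j) by (apply pow_lt; lra).
  apply (Rmult_le_reg_l (2 ^ j)); [exact H2j|]. rewrite Rinv_r by lra. lra.
Qed.

Lemma filterlim_circle_sum_uniform (f : C -> C) (phi : R -> C -> R) :
  entire_with_coeffs a f ->
  (forall t u v, Rabs (phi t u - phi t v) <= Cmod (u - v)) ->
  filterlim (fun N t => phi t (circle_sum N t)) eventually
    (@locally (fct_UniformSpace R R_CompleteNormedModule) (fun t => phi t (f (polar r t)))).
Proof.
  intros Hf Hphi. destruct (circle_sum_geom_tail f Hf) as [J HJ].
  apply filterlim_locally. intros eps.
  destruct (pow_lt_1_zero (/2) ltac:(rewrite Rabs_pos_eq; lra) eps (cond_pos eps)) as [N0 HN0].
  exists (max J N0). intros N HN t.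
  change (Rabs (phi t (circle_sum N t) - phi t (f (polar r t))) < eps).
  eapply Rle_lt_trans; [apply Hphi|].
  replace (circle_sum N t - f (polar r t))%C with (- (f (polar r t) - circle_sum N t))%C by ring.
  rewrite Cmod_opp. eapply Rle_lt_trans; [apply HJ; lia|].
  specialize (HN0 N ltac:(lia)). rewrite Rabs_pos_eq in HN0; auto. apply pow_le; lra.
Qed.

Lemma ex_derive_circle_sum (N : nat) (t : R) :
  ex_derive (fun t => fst (circle_sum N t)) t /\ ex_derive (fun t => snd (circle_sum N t)) t.
Proof.
  apply ex_derive_sum_n_parts. intros j. unfold polar, Cmult; simpl.
  split; auto_derive; trivial.
Qed.

Lemma continuous_Cmod_circle_sum (N : nat) (t : R) :
  continuous (fun t => Cmod (circle_sum N t)) t.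
Proof.
  destruct (ex_derive_circle_sum N t) as [H1 H2].
  apply continuous_sqrt_comp, (@ex_derive_continuous R_AbsRing R_NormedModule).
  apply (ex_derive_plus (fun s => fst (circle_sum N s) ^ 2)); apply ex_derive_pow; assumption.
Qed.

Lemma ex_RInt_Cmod_circle (f : C -> C) : entire_with_coeffs a f ->
  ex_RInt (fun t => Cmod (f (polar r t))) 0 (2 * PI).
Proof.
  intros Hf.
  destruct (filterlim_RInt (fun N t => Cmod (circle_sum N t)) 0 (2 * PI) eventually
    eventually_filter (fun t => Cmod (f (polar r t)))
    (fun N => RInt (fun t => Cmod (circle_sum N t)) 0 (2 * PI))) as [I [_ HI]].
  - intros N. apply RInt_correct, ex_RInt_continuous. intros t _.
    apply continuous_Cmod_circle_sum.
  - apply (filterlim_circle_sum_uniform f (fun _ u => Cmod u) Hf). intros _ u v.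
    exact (norm_triangle_inv u v).
  - now exists I.
Qed.

Lemma fourier_term_polar (c : C) (j k : nat) (t : R) :
  (c * polar 1 (- (INR k * t)) * (a j * polar (r ^ j) (INR j * t)))%C =
  (c * a j * polar (r ^ j) (IZR (Z.of_nat j - Z.of_nat k) * t))%C.
Proof.
  rewrite minus_IZR, <- !INR_IZR_INZ.
  replace (c * polar 1 (- (INR k * t)) * (a j * polar (r ^ j) (INR j * t)))%C
    with (c * a j * (polar 1 (- (INR k * t)) * polar (r ^ j) (INR j * t)))%C by ring.
  rewrite polar_mul. f_equal. f_equal; ring.
Qed.

Lemma is_RInt_fourier_term (c : C) (j k : nat) :
  is_RInt (fun t => fst (c * polar 1 (- (INR k * t)) * (a j * polar (r ^ j) (INR j * t)))%C)
    0 (2 * PI) (if Nat.eq_dec j k then 2 * PI * r ^ k * fst (c * a k)%C else 0).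
Proof.
  destruct (Nat.eq_dec j k) as [<-|Hjk].
  - apply (is_RInt_ext (fun _ => r ^ j * fst (c * a j)%C)).
    { intros t _. rewrite fourier_term_polar, fst_mul_polar, Z.sub_diag, Rmult_0_l, cos_0, sin_0.
      now rewrite Rmult_1_r, Rmult_0_r, Rminus_0_r. }
    replace (2 * PI * r ^ j * fst (c * a j)%C) with (scal (2 * PI - 0) (r ^ j * fst (c * a j)%C))
      by (unfold scal; simpl; unfold mult; simpl; ring).
    apply (@is_RInt_const R_NormedModule).
  - set (m := (Z.of_nat j - Z.of_nat k)%Z).
    apply (is_RInt_ext (fun t => scal (r ^ j)
      (fst (c * a j)%C * cos (IZR m * t) - snd (c * a j)%C * sin (IZR m * t)))).
    { intros t _. now rewrite fourier_term_polar, fst_mul_polar. }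
    replace 0 with (scal (r ^ j) 0) at 2 by (unfold scal; simpl; unfold mult; simpl; ring).
    apply (@is_RInt_scal R_NormedModule), is_RInt_cos_sin_period. unfold m. lia.
Qed.

Lemma is_RInt_fourier_circle_sum (c : C) (k N : nat) :
  is_RInt (fun t => fst (c * polar 1 (- (INR k * t)) * circle_sum N t)%C) 0 (2 * PI)
    (if Compare_dec.le_dec k N then 2 * PI * r ^ k * fst (c * a k)%C else 0).
Proof.
  induction N as [|N IH].
  - apply (is_RInt_ext (fun t => fst (c * polar 1 (- (INR k * t)) *
                                       (a 0%nat * polar (r ^ 0) (INR 0 * t)))%C)).
    { intros t _. unfold circle_sum. now rewrite sum_O. }
    pose proof (is_RInt_fourier_term c 0 k) as H. revert H.
    destruct (Nat.eq_dec 0 k), (Compare_dec.le_dec k 0); try lia; trivial.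
  - apply (is_RInt_ext (fun t => plus (fst (c * polar 1 (- (INR k * t)) * circle_sum N t)%C)
      (fst (c * polar 1 (- (INR k * t)) * (a (S N) * polar (r ^ S N) (INR (S N) * t)))%C))).
    { intros t _. unfold circle_sum. rewrite sum_Sn. unfold plus; simpl. ring. }
    pose proof (@is_RInt_plus R_NormedModule _ _ _ _ _ _ IH (is_RInt_fourier_term c (S N) k)) as H.
    revert H. destruct (Compare_dec.le_dec k N), (Nat.eq_dec (S N) k), (Compare_dec.le_dec k (S N));
      try lia; unfold plus; simpl; intros H; rewrite ?Rplus_0_r, ?Rplus_0_l in H; exact H.
Qed.

Lemma Cauchy_estimate (f : C -> C) (k : nat) :
  entire_with_coeffs a f -> Cmod (a k) * r ^ k <= M1 f r.
Proof.
  intros Hf. destruct (exists_unit_rotation (a k)) as [c [Hc Hca]].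
  set (phi := fun t u => fst (c * polar 1 (- (INR k * t)) * u)%C).
  assert (Hphi : forall t u, Rabs (phi t u) <= Cmod u).
  { intros t u. unfold phi. eapply Rle_trans; [apply re_le_Cmod|].
    rewrite Cmod_mult, Cmod_mul_polar by lra. pose proof (Cmod_ge_0 u). nra. }
  set (V := 2 * PI * r ^ k * Cmod (a k)).
  destruct (filterlim_RInt (fun N t => phi t (circle_sum N t)) 0 (2 * PI) eventually
    eventually_filter (fun t => phi t (f (polar r t)))
    (fun N => if Compare_dec.le_dec k N then V else 0)) as [I [HIlim HI]].
  - intros N. unfold V. rewrite <- Hca. apply is_RInt_fourier_circle_sum.
  - apply filterlim_circle_sum_uniform; [exact Hf|]. intros t u v.
    replace (phi t u - phi t v) with (phi t (u - v)%C) by (unfold phi; simpl; ring).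
    apply Hphi.
  - assert (HV : filterlim (fun N => if Compare_dec.le_dec k N then V else 0) eventually
                   (locally V)).
    { apply (filterlim_ext_loc (fun _ => V)); [|apply filterlim_const].
      exists k. intros N HN. now destruct (Compare_dec.le_dec k N). }
    rewrite <- (filterlim_locally_unique _ _ _ HV HIlim) in HI.
    assert (Hle : V <= RInt (fun t => Cmod (f (polar r t))) 0 (2 * PI)).
    { rewrite <- (is_RInt_unique _ _ _ _ HI). apply RInt_le.
      - pose proof PI_RGT_0. lra.
      - now exists V.
      - now apply ex_RInt_Cmod_circle.
      - intros t _. eapply Rle_trans; [apply Rle_abs|apply Hphi]. }
    apply le_M1. unfold V in Hle. lra.
Qed.

Lemma Cmod_circle_sum_le (N : nat) (t : R) :
  Cmod (circle_sum N t) <= sum_n (fun j => Cmod (a j) * r ^ j) N.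
Proof.
  assert (Hr : forall j, 0 <= r ^ j) by (intros j; apply pow_le; lra).
  unfold circle_sum. induction N as [|N IH].
  - rewrite !sum_O, Cmod_mul_polar by apply Hr. lra.
  - rewrite !sum_Sn. eapply Rle_trans; [apply Cmod_triangle|].
    rewrite Cmod_mul_polar by apply Hr. change (plus ?x ?y) with (x + y). lra.
Qed.

Lemma M1_le_of_vanishing (f : C -> C) (d : nat) :
  entire_with_coeffs a f -> (forall k, (d < k)%nat -> a k = 0%C) ->
  M1 f r <= sum_n (fun j => Cmod (a j) * r ^ j) d.
Proof.
  intros Hf Hd. set (B := sum_n (fun j => Cmod (a j) * r ^ j) d).
  assert (Hpt : forall t, Cmod (f (polar r t)) <= B).
  { intros t. replace (f (polar r t)) with (f (polar r t) - 0)%C by ring.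
    apply (is_series_Cmod_sub_le _ _ _ _ d (Hf (polar r t))). intros M HM.
    rewrite (sum_n_ext _ (fun j => a j * polar (r ^ j) (INR j * t))%C)
      by (intros; exact (power_term_polar _ _ _ _)).
    change (Cmod (circle_sum M t - 0) <= B).
    replace (circle_sum M t - 0)%C with (circle_sum M t) by ring.
    eapply Rle_trans; [apply Cmod_circle_sum_le|].
    replace M with (d + (M - d))%nat by lia. rewrite sum_n_vanishing_tail; [unfold B; lra|].
    intros k Hk. rewrite Hd, Cmod_0 by exact Hk. apply Rmult_0_l. }
  pose proof PI_RGT_0.
  assert (Hle : RInt (fun t => Cmod (f (polar r t))) 0 (2 * PI) <= RInt (fun _ => B) 0 (2 * PI)).
  { apply RInt_le; [lra|now apply ex_RInt_Cmod_circle|apply ex_RInt_const|].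
    intros t _. apply Hpt. }
  rewrite RInt_const in Hle. apply M1_le.
  change (scal (2 * PI - 0) B) with ((2 * PI - 0) * B) in Hle. lra.
Qed.

End Circle.

Lemma sum_n_pow_le (u : nat -> R) (r : R) (N : nat) : 1 <= r -> (forall j, 0 <= u j) ->
  sum_n (fun j => u j * r ^ j) N <= sum_n u N * r ^ N.
Proof.
  intros Hr Hu. induction N as [|N IH].
  - rewrite !sum_O. apply Rle_refl.
  - rewrite !sum_Sn. change (plus ?x ?y) with (x + y).
    assert (Hsum : 0 <= sum_n u N) by (rewrite sum_n_Reals; now apply cond_pos_sum).
    assert (HrN : 1 <= r ^ N) by now apply pow_R1_Rle.
    assert (sum_n u N * r ^ N <= sum_n u N * (r * r ^ N)) by (apply Rmult_le_compat_l; nra).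
    simpl pow. lra.
Qed.

Lemma sum_n_pow_le_lead (u : nat -> R) (r : R) (d : nat) : 1 <= r -> (forall j, 0 <= u j) ->
  sum_n (fun j => u j * r ^ j) d * r <= u d * r ^ d * r + sum_n u d * r ^ d.
Proof.
  intros Hr Hu. destruct d as [|d].
  - rewrite !sum_O. pose proof (Hu 0%nat). simpl pow. nra.
  - rewrite !sum_Sn. change (plus ?x ?y) with (x + y).
    pose proof (sum_n_pow_le u r d Hr Hu) as H.
    apply (Rmult_le_compat_r r) in H; [|lra].
    assert (0 <= u (S d) * (r * r ^ d))
      by (apply Rmult_le_pos; [apply Hu|apply (pow_le r (S d))]; lra).
    simpl pow. nra.
Qed.

Lemma kappa_tends_to_infty_of_higher_coef (a : nat -> C) (f : C -> C) (n k : nat) :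
  entire_with_coeffs a f -> (n < k)%nat -> a k <> 0%C -> tends_to_infty (kappa a f n).
Proof.
  intros Hf Hnk Hak M. unfold kappa.
  destruct (Req_EM_T (Cmod (a n)) 0) as [_|Han]; [exists 0; intros; exact I|].
  set (A := Cmod (a n)) in *. set (B := Cmod (a k)).
  assert (HA : 0 < A) by (pose proof (Cmod_ge_0 (a n)); unfold A in *; lra).
  assert (HB : 0 < B) by now apply Cmod_gt_0.
  exists (Rmax 1 (Rabs M * A / B)). intros r Hr. simpl.
  assert (Hr1 : 1 < r) by (eapply Rle_lt_trans; [apply Rmax_l|exact Hr]).
  assert (HMr : Rabs M * A < B * r).
  { assert (H : Rabs M * A / B < r) by (eapply Rle_lt_trans; [apply Rmax_r|exact Hr]).
    apply (Rmult_lt_compat_r B) in H; [|exact HB].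
    unfold Rdiv in H. rewrite Rmult_assoc, Rinv_l, Rmult_1_r in H by lra. lra. }
  assert (Hrn : 0 < r ^ n) by (apply pow_lt; lra).
  assert (Hrk : r * r ^ n <= r ^ k) by (apply (Rle_pow r (S n) k); lia || lra).
  pose proof (Cauchy_estimate a r ltac:(lra) f k Hf) as Hc. fold B in Hc.
  set (k1 := M1 f r / (A * r ^ n)).
  assert (Hk : M1 f r = k1 * (A * r ^ n)) by (unfold k1; field; lra).
  rewrite Hk in Hc.
  assert (Rabs M * A * r ^ n < B * r * r ^ n) by (apply Rmult_lt_compat_r; lra).
  assert (B * (r * r ^ n) <= B * r ^ k) by (apply Rmult_le_compat_l; lra).
  assert (HAr : 0 < A * r ^ n) by (apply Rmult_lt_0_compat; lra).
  apply (Rle_lt_trans _ (Rabs M)); [apply Rle_abs|].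
  apply (Rmult_lt_reg_r (A * r ^ n)); [exact HAr|lra].
Qed.

Lemma kappa_tends_to_infty_of_zero_coef (a : nat -> C) (f : C -> C) (n : nat) :
  a n = 0%C -> tends_to_infty (kappa a f n).
Proof.
  intros Han M. exists 0. intros r _. unfold kappa.
  destruct (Req_EM_T (Cmod (a n)) 0) as [_|H]; [exact I|].
  rewrite Han, Cmod_0 in H. lra.
Qed.

Lemma kappa_degree_tends_to_1 (a : nat -> C) (f : C -> C) (d : nat) :
  entire_with_coeffs a f -> poly_degree a d -> tends_to_fin (kappa a f d) 1.
Proof.
  intros Hf [Had Hvan] eps Heps.
  set (A := Cmod (a d)). set (T := sum_n (fun j => Cmod (a j)) d).
  assert (HA : 0 < A) by now apply Cmod_gt_0.
  exists (Rmax 1 (T / (A * eps))). intros r Hr.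
  assert (Hr1 : 1 < r) by (eapply Rle_lt_trans; [apply Rmax_l|exact Hr]).
  assert (HTr : T < A * eps * r).
  { assert (H : T / (A * eps) < r) by (eapply Rle_lt_trans; [apply Rmax_r|exact Hr]).
    apply (Rmult_lt_compat_r (A * eps)) in H; [|nra].
    unfold Rdiv in H. rewrite Rmult_assoc, Rinv_l, Rmult_1_r in H by nra. lra. }
  unfold kappa. destruct (Req_EM_T (Cmod (a d)) 0) as [H0|_].
  { exfalso. apply Had, Cmod_eq_0, H0. }
  fold A. eexists; split; [reflexivity|].
  assert (Hrd : 0 < r ^ d) by (apply pow_lt; lra).
  pose proof (Cauchy_estimate a r ltac:(lra) f d Hf) as Hlower.
  pose proof (M1_le_of_vanishing a r ltac:(lra) f d Hf Hvan) as Hupper.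
  pose proof (sum_n_pow_le_lead (fun j => Cmod (a j)) r d ltac:(lra) (fun j => Cmod_ge_0 _))
    as Hlead.
  cbv beta in Hlead. fold A T in Hlower, Hlead.
  set (k1 := M1 f r / (A * r ^ d)).
  assert (Hk : M1 f r = k1 * (A * r ^ d)) by (unfold k1; field; lra).
  rewrite Hk in Hlower, Hupper.
  set (X := A * r ^ d) in *.
  assert (HX : 0 < X) by (apply Rmult_lt_0_compat; lra).
  assert (Hk1 : 1 <= k1) by (apply (Rmult_le_reg_r X); lra).
  apply (Rmult_le_compat_r r) in Hupper; [|lra].
  assert (T * r ^ d < eps * (X * r)) by (unfold X; apply (Rmult_lt_compat_r (r ^ d)) in HTr; lra).
  assert (Hk1eps : k1 * (X * r) < (1 + eps) * (X * r)) by lra.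
  apply Rmult_lt_reg_r in Hk1eps; [|apply Rmult_lt_0_compat; lra].
  rewrite Rabs_pos_eq; lra.
Qed.

Theorem theorem4p4 (a : nat -> C) (f : C -> C) (Hf : entire_with_coeffs a f) :
  (transcendental a -> forall n : nat, tends_to_infty (kappa a f n)) /\
  (forall d : nat, poly_degree a d ->
     (forall n : nat, n <> d -> tends_to_infty (kappa a f n)) /\
     tends_to_fin (kappa a f d) 1).
Proof.
  split.
  - intros Htr n. destruct (Htr (S n)) as [k [Hk Hak]].
    exact (kappa_tends_to_infty_of_higher_coef a f n k Hf Hk Hak).
  - intros d Hd. split; [|exact (kappa_degree_tends_to_1 a f d Hf Hd)].
    intros n Hn. destruct (proj1 (Nat.lt_gt_cases n d) Hn) as [Hlt|Hgt].
    + exact (kappa_tends_to_infty_of_higher_coef a f n d Hf Hlt (proj1 Hd)).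
    + exact (kappa_tends_to_infty_of_zero_coef a f n (proj2 Hd n Hgt)).
Qed.
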